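(* Define numbers $m_{n,k}$ ($n,k\ge0$) by $m_{0,k}=\delta_{0k}$ and $m_{n,k}=(m_{n-1,0}+m_{n-1,1}+\cdots+m_{n-1,k})^{-1}$ for $n\ge1$. Then for each fixed $k\ge0$, $$m_{0,k}\le m_{2,k}\le m_{4,k}\le\cdots,\qquad m_{1,k}\ge m_{3,k}\ge m_{5,k}\ge\cdots,$$ and $\lim_{n\to\infty}m_{2n,k}=\lim_{n\to\infty}m_{2n+1,k}=m_k$. Furthermore $\lim_{k\to\infty}m_{n,k}=0$ for every $n\ge2$; consequently the probability measure $\mu_n=\widehat T^{\circ n}(\delta_0)$, whose moment sequence is $(m_{n,k})_k$, has no mass at $t=1$ for $n\ge2$.
   Context: Let $(m_n)_{n\ge0}$ be the unique sequence of positive reals with $m_0=1$ and $(1+m_1+\cdots+m_n)\,m_n=1$ for $n\ge1$. For a normalized Hausdorff moment sequence $\mathbf a=(a_n)_n$ (i.e. $a_n=\int_0^1 t^n\,d\nu(t)$ for a probability measure $\nu$ on $[0,1]$), $T(\mathbf a)_n=1/(a_0+\cdots+a_n)$ defines again a normalized Hausdorff moment sequence; $\widehat T$ denotes the corresponding map on probability measures on $[0,1]$ (so $\widehat T(\nu)$ has moments $T(\mathbf a)$). $\delta_q$ denotes the unit point mass at $q$. *)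

From HB Require Import structures.
From mathcomp Require Import all_boot all_order all_algebra.
From mathcomp Require Import all_classical all_reals all_analysis.
Set Implicit Arguments. Unset Strict Implicit. Unset Printing Implicit Defensive.
Import Order.TTheory GRing.Theory Num.Theory.
Local Open Scope ring_scope.

Fixpoint mnk (R : realType) (n k : nat) : R :=
  match n with
  | 0 => (k == 0%N)%:R
  | n'.+1 => (\sum_(i < k.+1) mnk R n' i)^-1
  end.

From HB Require Import structures.
From mathcomp Require Import all_boot all_order all_algebra.
From mathcomp Require Import all_classical all_reals all_analysis.
From mathcomp Require Import lra.
Set Implicit Arguments. Unset Strict Implicit. Unset Printing Implicit Defensive.
Import Order.TTheory GRing.Theory Num.Theory numFieldNormedType.Exports.
Local Open Scope classical_set_scope.
Local Open Scope ring_scope.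

(* With T a k := (a_0 + ... + a_k)^-1 (inv_psum below), m_{n+1} = T m_n and
   m = T m.  On sequences with a_0 = 1 and a >= 0, T is antitone, so T o T is
   monotone: from m_0 <= m_2 and m_0 <= m <= m_1 the even subsequence increases
   below m and the odd one decreases above m.  By induction on k, their limits
   L and U at k satisfy U = (S + L)^-1 and L = (S + U)^-1 with
   S = m_0 + ... + m_{k-1}, and the only 2-cycle of y |-> (S + y)^-1 on [0, oo)
   is its fixed point m_k.  For n >= 2, m_{n,k} <= m_{3,k} = 1/H_{k+1} -> 0.
   Since x^{2k} dominates the indicator of {1} on all of R, the atom of mu_n at
   1 is at most m_{n,2k} <= m_{n,k}. *)

Lemma mul2nS n : (2 * n.+1 = (2 * n).+2)%N.
Proof. by rewrite mulnS. Qed.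

Section InvPsum.
Variable R : realFieldType.

Definition inv_psum (a : nat -> R) k := (\sum_(i < k.+1) a i)^-1.

Variables (a b : nat -> R).
Hypotheses (a0 : a 0%N = 1) (a_ge0 : forall i, 0 <= a i).

Lemma psum_ge1 k : 1 <= \sum_(i < k.+1) a i.
Proof. by rewrite big_ord_recl /= a0 lerDl sumr_ge0. Qed.

Lemma psum_gt0 k : 0 < \sum_(i < k.+1) a i.
Proof. exact: lt_le_trans ltr01 (psum_ge1 k). Qed.

Lemma inv_psum0 : inv_psum a 0 = 1.
Proof. by rewrite /inv_psum big_ord1 a0 invr1. Qed.

Lemma inv_psum_ge0 k : 0 <= inv_psum a k.
Proof. by rewrite invr_ge0 ltW ?psum_gt0. Qed.

Lemma inv_psum_le :
  (forall i, a i <= b i) -> forall k, inv_psum b k <= inv_psum a k.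
Proof.
move=> ab k; have ab_sum : \sum_(i < k.+1) a i <= \sum_(i < k.+1) b i.
  exact: ler_sum.
by rewrite lef_pV2 ?posrE // (lt_le_trans (psum_gt0 k)).
Qed.

Lemma inv_psum_nonincreasing : nonincreasing_seq (inv_psum a).
Proof.
apply/nonincreasing_seqP => k; rewrite /inv_psum.
by rewrite lef_pV2 ?posrE ?psum_gt0 // [leRHS]big_ord_recr lerDl.
Qed.

End InvPsum.

Lemma inv_psum2_le (R : realFieldType) (a b : nat -> R) :
  a 0%N = 1 -> b 0%N = 1 -> (forall i, 0 <= a i) -> (forall i, a i <= b i) ->
  forall k, inv_psum (inv_psum a) k <= inv_psum (inv_psum b) k.
Proof.
move=> a0 b0 a_ge0 ab.
have b_ge0 i : 0 <= b i by exact: le_trans (a_ge0 i) (ab i).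
apply: inv_psum_le; [exact: inv_psum0 | exact: inv_psum_ge0 |].
exact: inv_psum_le.
Qed.

Lemma inv_addr_period2 (R : realFieldType) (S x y z : R) :
  0 < S -> 0 <= x -> 0 <= y -> 0 <= z ->
  y = (S + x)^-1 -> x = (S + y)^-1 -> z = (S + z)^-1 -> x = z /\ y = z.
Proof.
move=> S_gt0 x_ge0 y_ge0 z_ge0 yE xE zE.
have inv_mul w : 0 <= w -> (S + w)^-1 * (S + w) = 1.
  by move=> w_ge0; rewrite mulVf // gt_eqF // ltr_wpDr.
have yx : y * (S + x) = 1 by rewrite yE inv_mul.
have xy : x * (S + y) = 1 by rewrite xE inv_mul.
have zz : z * (S + z) = 1 by rewrite {1}zE inv_mul.
have xEy : x = y by nra.
by split; nra.
Qed.

Section InvPsumLimit.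
Variable R : realType.

Lemma cvg_psum (a : nat -> nat -> R) (l : nat -> R) k :
  (forall i, (i < k)%N -> (fun j => a j i) @ \oo --> l i) ->
  (fun j => \sum_(i < k) a j i) @ \oo --> \sum_(i < k) l i.
Proof.
move=> a_cvg; apply: (@cvg_big _ _ +%R 0 xpredT add_continuous) => i _.
exact: a_cvg.
Qed.

Lemma cvg_inv_psum (a : nat -> nat -> R) k (S L : R) :
  (fun j => \sum_(i < k) a j i) @ \oo --> S -> (fun j => a j k) @ \oo --> L ->
  S + L != 0 -> (fun j => inv_psum (a j) k) @ \oo --> (S + L)^-1.
Proof.
move=> S_cvg L_cvg SL_neq0.
have -> : (fun j => inv_psum (a j) k)
    = (fun j => (\sum_(i < k) a j i + a j k)^-1).
  by apply/funext => j; rewrite /inv_psum big_ord_recr.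
exact: cvgV (cvgD S_cvg L_cvg).
Qed.

End InvPsumLimit.

Section Mnk.
Variable R : realType.
Implicit Types (n k : nat).

Lemma mnkS n : mnk R n.+1 = inv_psum (mnk R n).
Proof. by []. Qed.

Lemma mnk_n0 n : mnk R n 0 = 1.
Proof. by elim: n => // n IHn; rewrite mnkS inv_psum0. Qed.

Lemma mnk_ge0 n k : 0 <= mnk R n k.
Proof.
elim: n k => [|n IHn] k; first exact: ler0n.
exact/inv_psum_ge0/IHn/mnk_n0.
Qed.

Lemma mnk_nonincreasing n : nonincreasing_seq (mnk R n.+1).
Proof. exact/inv_psum_nonincreasing/mnk_ge0/mnk_n0. Qed.

Lemma mnkSS_le p q :
  (forall k, mnk R p k <= mnk R q k) -> forall k, mnk R p.+2 k <= mnk R q.+2 k.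
Proof.
move=> pq; apply: inv_psum2_le => //; [exact: mnk_n0 | exact: mnk_n0 |].
exact: mnk_ge0.
Qed.

Lemma mnk0_le n k : mnk R 0 k <= mnk R n k.
Proof. by case: k => [|k]; rewrite ?mnk_n0 // mnk_ge0. Qed.

Lemma mnk_even_le_SS n k : mnk R (2 * n) k <= mnk R (2 * n).+2 k.
Proof.
elim: n k => [|n IHn] k; first exact: mnk0_le.
by rewrite mul2nS; apply: mnkSS_le.
Qed.

Lemma mnk_even_nondecreasing k : nondecreasing_seq (fun n => mnk R (2 * n) k).
Proof. by apply/nondecreasing_seqP => n; rewrite mul2nS mnk_even_le_SS. Qed.

Lemma mnk_odd_nonincreasing k : nonincreasing_seq (fun n => mnk R (2 * n).+1 k).
Proof.
apply/nonincreasing_seqP => n; rewrite mul2nS !mnkS.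
by apply: inv_psum_le; [exact: mnk_n0 | exact: mnk_ge0 | exact: mnk_even_le_SS].
Qed.

Lemma mnk_even_le_odd n k : mnk R (2 * n) k <= mnk R (2 * n).+1 k.
Proof.
elim: n k => [|n IHn] k; first exact: mnk0_le.
by rewrite mul2nS; apply: mnkSS_le.
Qed.

Lemma mnk_le_mnk3 n k : (2 <= n)%N -> mnk R n k <= mnk R 3 k.
Proof.
move=> n_ge2; rewrite -[n]odd_double_half -mul2n.
have half_ge1 : (1 <= n./2)%N by exact: (half_leq n_ge2).
apply: (@le_trans _ _ (mnk R (2 * n./2).+1 k)).
  by case: (odd n); rewrite ?add1n ?add0n ?mnk_even_le_odd.
exact: (mnk_odd_nonincreasing k half_ge1).
Qed.

Lemma mnk3E k : mnk R 3 k = (series (@harmonic R) k.+1)^-1.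
Proof.
have mnk1 i : mnk R 1 i = 1.
  by rewrite mnkS /inv_psum big_ord_recl big1 ?addr0 ?invr1.
have mnk2 i : mnk R 2 i = i.+1%:R^-1.
  rewrite mnkS /inv_psum (eq_bigr (fun=> 1)) => [|j _]; last exact: mnk1.
  by rewrite sumr_const card_ord.
rewrite mnkS /inv_psum; under eq_bigr do rewrite mnk2.
by rewrite /series /= big_mkord.
Qed.

Lemma cvg_mnk3 : mnk R 3 @ \oo --> 0.
Proof.
have harmonic_ge1 k : 1 <= series (@harmonic R) k.+1.
  rewrite /series /= big_mkord; apply: (psum_ge1 (a := @harmonic R)) => [|i].
    by rewrite /harmonic /= invr1.
  exact: harmonic_ge0.
have harmonic_dvg : (fun k => series (@harmonic R) k.+1) @ \oo --> +oo.
  rewrite (cvg_shiftS (series (@harmonic R))).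
  apply: nondecreasing_dvgn_lt; last exact: dvg_harmonic.
  by apply: nondecreasing_series => n _ _; exact: harmonic_ge0.
rewrite (_ : mnk R 3 = fun k => (series (@harmonic R) k.+1)^-1); last first.
  by apply/funext => k; rewrite mnk3E.
apply/gtr0_cvgV0 => //; apply: nearW => k.
exact: lt_le_trans ltr01 (harmonic_ge1 k).
Qed.

Lemma cvg_mnk_ge2 n : (2 <= n)%N -> mnk R n @ \oo --> 0.
Proof.
move=> n_ge2; apply: (squeeze_cvgr _ (cvg_cst 0) cvg_mnk3).
by apply: nearW => k; rewrite mnk_ge0 mnk_le_mnk3.
Qed.

Variables (m : nat -> R) (m0 : m 0%N = 1) (m_gt0 : forall n, 0 < m n).
Hypothesis m_rec :
  forall n, (1 <= n)%N -> (1 + \sum_(1 <= i < n.+1) m i) * m n = 1.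

Lemma m_ge0 n : 0 <= m n. Proof. exact: ltW. Qed.

Lemma inv_psum_m : inv_psum m = m.
Proof.
apply/funext; case => [|k]; first by rewrite inv_psum0.
rewrite /inv_psum -(big_mkord xpredT) big_ltn // m0.
have sum_neq0 : 1 + \sum_(1 <= i < k.+2) m i != 0.
  by rewrite gt_eqF // ltr_wpDr // sumr_ge0 // => i _; exact: m_ge0.
by rewrite -[RHS](mulKf sum_neq0) m_rec // mulr1.
Qed.

Lemma mnk_even_le n k : mnk R (2 * n) k <= m k.
Proof.
elim: n k => [|n IHn] k; first by case: k => [|k]; rewrite ?m0 ?m_ge0.
rewrite mul2nS -{1}inv_psum_m -{1}inv_psum_m.
by apply: inv_psum2_le => //; [exact: mnk_n0 | exact: mnk_ge0].
Qed.

Lemma mnk_odd_ge n k : m k <= mnk R (2 * n).+1 k.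
Proof.
rewrite mnkS -{1}inv_psum_m.
by apply: inv_psum_le; [exact: mnk_n0 | exact: mnk_ge0 | exact: mnk_even_le].
Qed.

Lemma cvg_mnk_parity k :
  (fun n => mnk R (2 * n) k) @ \oo --> m k /\
  (fun n => mnk R (2 * n).+1 k) @ \oo --> m k.
Proof.
elim/ltn_ind: k => -[_ | k IHk].
  by rewrite m0; split; under eq_fun do rewrite mnk_n0; exact: cvg_cst.
set S := \sum_(i < k.+1) m i.
have S_gt0 : 0 < S by exact/psum_gt0/m_ge0.
have cvg_even : cvgn (fun n => mnk R (2 * n) k.+1).
  apply: nondecreasing_is_cvgn; first exact: mnk_even_nondecreasing.
  by exists (m k.+1) => _ [n _ <-]; exact: mnk_even_le.
have cvg_odd : cvgn (fun n => mnk R (2 * n).+1 k.+1).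
  apply: nonincreasing_is_cvgn; first exact: mnk_odd_nonincreasing.
  by exists (m k.+1) => _ [n _ <-]; exact: mnk_odd_ge.
set L := limn _ in cvg_even; set U := limn _ in cvg_odd.
have L_ge0 : 0 <= L by apply: limr_ge => //; apply: nearW => n; exact: mnk_ge0.
have U_ge0 : 0 <= U by apply: limr_ge => //; apply: nearW => n; exact: mnk_ge0.
have sum_even : (fun n => \sum_(i < k.+1) mnk R (2 * n) i) @ \oo --> S.
  by apply: (cvg_psum (a := fun n => mnk R (2 * n))) => i /IHk[].
have sum_odd : (fun n => \sum_(i < k.+1) mnk R (2 * n).+1 i) @ \oo --> S.
  by apply: (cvg_psum (a := fun n => mnk R (2 * n).+1)) => i /IHk[].
have UE : U = (S + L)^-1.
  apply: (cvg_lim (@Rhausdorff R)).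
  apply: (cvg_inv_psum (a := fun n => mnk R (2 * n))) => //.
  by rewrite gt_eqF // ltr_wpDr.
have LE : L = (S + U)^-1.
  rewrite /L; apply: (cvg_lim (@Rhausdorff R)).
  rewrite -(cvg_shiftS (fun n => mnk R (2 * n) k.+1)).
  under eq_fun do rewrite mul2nS.
  apply: (cvg_inv_psum (a := fun n => mnk R (2 * n).+1)) => //.
  by rewrite gt_eqF // ltr_wpDr.
have mE : m k.+1 = (S + m k.+1)^-1.
  by rewrite -{1}inv_psum_m /inv_psum big_ord_recr.
have [mL mU] := inv_addr_period2 S_gt0 L_ge0 U_ge0 (m_ge0 _) UE LE mE.
by split; [rewrite -mL | rewrite -mU].
Qed.

End Mnk.

Section AtomAtOne.
Variable R : realType.
Local Open Scope ereal_scope.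

Lemma measure_set1_le_even_moment (mu : {measure set R -> \bar R}) k :
  mu [set 1%R] <= \int[mu]_x (x ^+ (2 * k))%:E.
Proof.
rewrite -(setIT [set 1%R]) -integral_indic //.
apply: ge0_le_integral => //.
- apply/measurable_realfun.measurable_EFinP.
  exact: measurable_realfun.measurable_indic.
- apply/measurable_realfun.measurable_EFinP.
  exact: measurable_realfun.exprn_measurable.
move=> x _; rewrite lee_fin indicE; case: (boolP (x \in [set 1%R])).
  by rewrite inE => ->; rewrite expr1n.
by move=> _; rewrite exprM exprn_ge0 ?sqr_ge0.
Qed.

Lemma lee_cvg0_eq0 (x : \bar R) (u : nat -> R) :
  0 <= x -> (forall k, x <= (u k)%:E) -> u @ \oo --> 0%R -> x = 0.
Proof.
case: x => [r| |] // r_ge0 le_u u_cvg; last by have := le_u 0%N.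
suff -> : r = 0%R by []; apply/le_anti.
move: r_ge0; rewrite lee_fin => ->.
rewrite andbT -(cvg_lim (@Rhausdorff R) u_cvg).
by apply: limr_ge; [exact: cvgP u_cvg | apply: nearW => k; rewrite -lee_fin].
Qed.

End AtomAtOne.

Theorem lemma2p1 (R : realType) (m : nat -> R)
  (hm0 : m 0%N = 1) (hpos : forall n, 0 < m n)
  (hrec : forall n, (1 <= n)%N -> (1 + \sum_(1 <= i < n.+1) m i) * m n = 1) :
  (forall k, nondecreasing_seq (fun n => mnk R (2 * n) k)) /\
  (forall k, nonincreasing_seq (fun n => mnk R (2 * n).+1 k)) /\
  (forall k, (fun n : nat => mnk R (2 * n) k : R) @ \oo --> m k) /\
  (forall k, (fun n : nat => mnk R (2 * n).+1 k : R) @ \oo --> m k) /\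
  (forall n, (2 <= n)%N -> (fun k : nat => mnk R n k : R) @ \oo --> (0 : R)) /\
  (forall n, (2 <= n)%N -> forall mu : probability R R,
      mu (~` `[0, 1]) = 0%E ->
      (forall k, (\int[mu]_x (x ^+ k)%:E = (mnk R n k)%:E)%E) ->
      mu [set 1] = 0%E).
Proof.
have cvg_parity := cvg_mnk_parity hm0 hpos hrec.
split; first exact: mnk_even_nondecreasing.
split; first exact: mnk_odd_nonincreasing.
split; first by move=> k; have [] := cvg_parity k.
split; first by move=> k; have [] := cvg_parity k.
split; first exact: cvg_mnk_ge2.
move=> [|n] // n_ge2 mu _ moments.
apply: (lee_cvg0_eq0 (measure_ge0 _ _) _ (cvg_mnk_ge2 n_ge2)) => k.
apply: le_trans (measure_set1_le_even_moment mu k) _; rewrite moments lee_fin.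
by apply: mnk_nonincreasing; rewrite mul2n -addnn leq_addr.
Qed.
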